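(* Let $S=\langle P,\varphi\rangle$ be a SUT model, $t$ a strength, $N\ge1$ an integer and $lb$ an integer with $0\le lb<CAN(t,S)$. Consider the Weighted Partial MaxSAT instance $WPMSat_{CCX}^{N,t,S,lb}$ (defined in the context) with weights $w_i$. (1) If $w_i=2^{i-(lb+2)}$ for all $i$: when $N\ge CAN(t,S)$ its optimal cost is $2^{CAN(t,S)-(lb+1)}-1$, and otherwise it is $\infty$. (2) If $w_i=i-(lb+2)+1$ for all $i$: when $N\ge CAN(t,S)$ its optimal cost is $(1+n)\cdot n/2$ where $n=CAN(t,S)-(lb+1)$, and otherwise it is $\infty$.
   Context: A SUT model is $S=\langle P,\varphi\rangle$, where $P$ is a finite set of parameters, each $p\in P$ having a finite nonempty domain $d(p)$, and $\varphi$ is a propositional formula whose atoms have the form $(p=v)$ with $p\in P$, $v\in d(p)$. A test case is a full assignment $A$ giving each $p$ a value in $d(p)$ such that $\varphi$ is true when each atom $(p=v)$ is read as true iff $A(p)=v$; it is assumed that at least one test case exists. Fix a strength $t$ with $1\le t\le|P|$. A $t$-tuple is an assignment of values to exactly $t$ distinct parameters, viewed as a set of pairs $(p,v)$; a test case covers $\tau$ if it assigns $v$ to $p$ for every $(p,v)\in\tau$. A $t$-tuple is allowed if some test case covers it; $\mathcal T_a$ is the set of allowed $t$-tuples. A covering array $CA(N;t,S)$ is a list of $N$ test cases (repetitions allowed) covering every allowed $t$-tuple; $CAN(t,S)$ is the minimum $N$ for which a $CA(N;t,S)$ exists. $[N]=\{1,\dots,N\}$. A Weighted Partial MaxSAT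 instance consists of hard constraints and soft clauses $(c,w)$ with positive integer weight $w$; its optimal cost is the minimum, over truth assignments satisfying all hard constraints, of the total weight of falsified soft clauses, and $\infty$ if the hard constraints are unsatisfiable. Variables: $x_{i,p,v}$ ($i\in[N]$, $p\in P$, $v\in d(p)$), $c^i_\tau$ ($i\in\{0,\dots,N\}$, $\tau\in\mathcal T_a$), $u_i$ ($i\in\{lb+2,\dots,N\}$). Hard constraints of $WPMSat_{CCX}^{N,t,S,lb}$: (X) for every $i\in[N]$, $p\in P$: exactly one of $\{x_{i,p,v}:v\in d(p)\}$ is true; (SUTX) for every $i\in[N]$: the formula obtained from $\varphi$ by replacing each atom $(p=v)$ with $x_{i,p,v}$; (CCX) (a) for every $i\in[N]$, $\tau\in\mathcal T_a$, $(p,v)\in\tau$: $c^i_\tau\rightarrow(c^{i-1}_\tau\vee x_{i,p,v})$; (b) for every $\tau\in\mathcal T_a$: the unit clause $c^N_\tau$; (c) for every $\tau\in\mathcal T_a$: $c^N_\tau\rightarrow\neg c^0_\tau$; (BSU) for every $i\in\{lb+2,\dots,N-1\}$: $u_{i+1}\rightarrow u_i$; (CCU) for every $i\in\{lb+2,\dots,N\}$, $\tau\in\mathcal T_a$: $\neg c^{i-1}_\tau\rightarrow u_i$. Soft clauses: $(\neg u_i,w_i)$ for every $i\in\{lb+2,\dots,N\}$. *)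

From mathcomp Require Import all_boot.
Set Implicit Arguments. Unset Strict Implicit. Unset Printing Implicit Defensive.

Inductive form (A : Type) : Type :=
| FTrue | FFalse
| FAtom of A
| FNot of form A
| FAnd of form A & form A
| FOr of form A & form A
| FImp of form A & form A
| FIff of form A & form A.
Arguments FTrue {A}. Arguments FFalse {A}.

Fixpoint eval_form (A : Type) (s : A -> bool) (f : form A) : bool :=
  match f with
  | FTrue => true
  | FFalse => false
  | FAtom a => s a
  | FNot g => ~~ eval_form s g
  | FAnd g h => eval_form s g && eval_form s h
  | FOr g h => eval_form s g || eval_form s h
  | FImp g h => eval_form s g ==> eval_form s h
  | FIff g h => eval_form s g == eval_form s h
  end.

Fixpoint subst_form (A B : Type) (r : A -> form B) (f : form A) : form B :=
  match f with
  | FTrue => FTrue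
  | FFalse => FFalse
  | FAtom a => r a
  | FNot g => FNot (subst_form r g)
  | FAnd g h => FAnd (subst_form r g) (subst_form r h)
  | FOr g h => FOr (subst_form r g) (subst_form r h)
  | FImp g h => FImp (subst_form r g) (subst_form r h)
  | FIff g h => FIff (subst_form r g) (subst_form r h)
  end.

Fixpoint atoms (A : Type) (f : form A) : seq A :=
  match f with
  | FTrue | FFalse => [::]
  | FAtom a => [:: a]
  | FNot g => atoms g
  | FAnd g h | FOr g h | FImp g h | FIff g h => atoms g ++ atoms h
  end.

Definition big_or (A : Type) (l : seq (form A)) : form A := foldr (@FOr A) FFalse l.
Definition big_and (A : Type) (l : seq (form A)) : form A := foldr (@FAnd A) FTrue l.

Definition exactly_one (A : Type) (l : seq (form A)) : form A :=
  FAnd (big_or l)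
       (big_and [seq FNot (FAnd (nth FFalse l i) (nth FFalse l j))
                | i <- iota 0 (size l), j <- iota i.+1 (size l - i.+1)]).

Record wpms (Var : Type) := WPMS {
  hard : seq (form Var);
  soft : seq (form Var * nat)
}.

Definition hard_sat (Var : Type) (I : wpms Var) (s : Var -> bool) : Prop :=
  all (eval_form s) (hard I).

Definition cost (Var : Type) (I : wpms Var) (s : Var -> bool) : nat :=
  \sum_(c <- soft I) (if eval_form s c.1 then 0 else c.2).

(* [OptimalCost I oc]: the optimal cost of I is oc, where None = infinity. *)
Definition OptimalCost (Var : Type) (I : wpms Var) (oc : option nat) : Prop :=
  match oc with
  | None => ~ exists s, hard_sat I s
  | Some k => (exists s, hard_sat I s /\ cost I s = k) /\
              (forall s, hard_sat I s -> k <= cost I s)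
  end.

(* SUT models: parameters P, values V, domains d p (a subset of V),    *)
(* and a formula phi with atoms (p, v) read as "p = v".               *)
Section SUT.
Variables (P V : finType) (d : P -> {set V}) (phi : form (P * V)).

Definition test_case (A : {ffun P -> V}) : bool :=
  [forall p, A p \in d p] && eval_form (fun a : P * V => A a.1 == a.2) phi.

Definition is_ttuple (t : nat) (tau : {set P * V}) : bool :=
  [&& #|tau| == t,
      [forall x in tau, x.2 \in d x.1] &
      [forall x in tau, forall y in tau, (x.1 == y.1) ==> (x == y)]].

Definition covers (A : {ffun P -> V}) (tau : {set P * V}) : bool :=
  [forall x in tau, A x.1 == x.2].

Definition allowed_tuples (t : nat) : {set {set P * V}} :=
  [set tau | is_ttuple t tau & [exists A, test_case A && covers A tau]].

Definition has_CA (t N : nat) : bool :=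
  [exists f : {ffun 'I_N -> {ffun P -> V}},
     [forall i, test_case (f i)] &&
     [forall tau in allowed_tuples t, exists i, covers (f i) tau]].

Lemma has_CA_ex (t : nat) : exists N, has_CA t N.
Proof.
case: (pickP test_case) => [A0 HA0|Hn].
- exists #|allowed_tuples t|.
  pose g (i : 'I_#|allowed_tuples t|) :=
    odflt A0 [pick A | test_case A && covers A (enum_val i)].
  apply/existsP; exists [ffun i => g i]; apply/andP; split.
  + apply/forallP => i; rewrite ffunE /g.
    by case: pickP => [A /andP[]|] //.
  + apply/forall_inP => tau Htau; apply/existsP.
    exists (enum_rank_in Htau tau); rewrite ffunE /g enum_rankK_in //.
    case: pickP => [A /andP[] //|Hno].
    move: Htau; rewrite inE => /andP[_ /existsP[A HA]].
    by move: (Hno A); rewrite HA.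
- exists 0; apply/existsP; exists [ffun i : 'I_0 => ltac:(by case: i)].
  apply/andP; split; first by apply/forallP => -[].
  apply/forall_inP => tau; rewrite inE => /andP[_ /existsP[A /andP[HA _]]].
  by move: (Hn A); rewrite HA.
Qed.

Definition CAN (t : nat) : nat := ex_minn (has_CA_ex t).

Inductive mvar :=
| Xv of nat & P & V
| Cv of nat & {set P * V}
| Uv of nat.

Definition fv (x : mvar) : form mvar := FAtom x.

(* indices lb+2 .. M (inclusive) *)
Definition range (a b : nat) : seq nat := iota a (b.+1 - a).

Definition WPMSat_CCX (N t lb : nat) (w : nat -> nat) : wpms mvar :=
  let Ta := enum (allowed_tuples t) in
  WPMS
  (
    [seq exactly_one [seq fv (Xv i p v) | v <- enum (d p)]
    | i <- range 1 N, p <- enum P]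
 ++
    [seq subst_form (fun a : P * V => fv (Xv i a.1 a.2)) phi | i <- range 1 N]
 ++
    flatten [seq [seq FImp (fv (Cv i tau)) (FOr (fv (Cv i.-1 tau)) (fv (Xv i pv.1 pv.2)))
                 | pv <- enum tau]
            | i <- range 1 N, tau <- Ta]
 ++
    [seq fv (Cv N tau) | tau <- Ta]
 ++
    [seq FImp (fv (Cv N tau)) (FNot (fv (Cv 0 tau))) | tau <- Ta]
 ++
    [seq FImp (fv (Uv i.+1)) (fv (Uv i)) | i <- range (lb + 2) N.-1]
 ++
    [seq FImp (FNot (fv (Cv i.-1 tau))) (fv (Uv i))
    | i <- range (lb + 2) N, tau <- Ta] )
  (
    [seq (FNot (fv (Uv i)), w i) | i <- range (lb + 2) N] ).

End SUT.

From mathcomp Require Import all_boot zify.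
Set Implicit Arguments. Unset Strict Implicit. Unset Printing Implicit Defensive.

(* A model s of the hard constraints encodes N test cases (row i takes at p the unique v
   with x_{i,p,v}), and by (CCX)(a) and (c) a true c^k_tau forces tau to be covered by one
   of the rows 1..k.  Hence (CCX)(b) turns the rows into a covering array, so CAN <= N,
   and a false u_i forces every c^{i-1}_tau by (CCU), so CAN <= i - 1: every u_i with
   i <= CAN is true.  Conversely a covering array with CAN rows extends to a model in which
   u_i holds exactly for i <= CAN.  The optimal cost is therefore the sum of the w_i over
   lb + 2 <= i <= CAN, a geometric sum in case (1) and an arithmetic one in case (2). *)

Lemma all_flatten (T : Type) (a : pred T) (ss : seq (seq T)) :
  all a (flatten ss) = all (all a) ss.
Proof. by elim: ss => //= s ss IH; rewrite all_cat IH. Qed.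

Section FormEval.
Variables A B : Type.

Lemma eval_subst_form (s : B -> bool) (r : A -> form B) (f : form A) :
  eval_form s (subst_form r f) = eval_form (fun a => eval_form s (r a)) f.
Proof. by elim: f => //= g -> // h ->. Qed.

Lemma eval_big_or (s : A -> bool) (l : seq (form A)) :
  eval_form s (big_or l) = has (eval_form s) l.
Proof. by elim: l => //= f l ->. Qed.

Lemma eval_big_and (s : A -> bool) (l : seq (form A)) :
  eval_form s (big_and l) = all (eval_form s) l.
Proof. by elim: l => //= f l ->. Qed.

Lemma exactly_one_mapP (T : eqType) (s : A -> bool) (g : T -> A) (e : seq T) :
  uniq e ->
  reflect (exists2 x, x \in e & {in e, forall y, s (g y) = (y == x)})
          (eval_form s (exactly_one [seq FAtom (g v) | v <- e])).
Proof.
move=> Ue; rewrite /exactly_one /= eval_big_or eval_big_and has_map size_map.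
have nthE i x : i < size e -> nth FFalse [seq FAtom (g v) | v <- e] i = FAtom (g (nth x e i)).
  by move=> ie; rewrite (nth_map x).
apply: (iffP andP) => [[/hasP[x xe sx] /all_allpairsP no2] | [x xe sE]].
  rewrite /= in sx; exists x => // y ye; apply/idP/eqP => [sy | -> //].
  wlog lt_yx : x y xe ye sx sy / index y e < index x e.
    move=> IH; case: (ltngtP (index y e) (index x e)) => [|lt_xy|]; first exact: IH.
      by rewrite (IH y x).
    by move=> eq_idx; rewrite -(nth_index x ye) eq_idx nth_index.
  have := no2 (index y e) (index x e); rewrite !mem_iota index_mem ye.
  rewrite !(nthE _ x) ?index_mem // !nth_index //= sx sy.
  have xs : index x e < size e by rewrite index_mem.
  by move=> no; suff: false by []; apply: no => //; lia.
split; first by apply/hasP; exists x => //=; rewrite sE.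
apply/all_allpairsP => i j; rewrite !mem_iota => /andP[_ ie] /andP[ij je].
have je' : j < size e by lia.
rewrite !(nthE _ x) //= !sE ?mem_nth //; apply/nandP.
case: (nth x e i =P x) => [ei|]; [right|by left].
by rewrite -[X in _ != X]ei nth_uniq //; lia.
Qed.

End FormEval.

Lemma eq_in_eval_form (A : eqType) (s1 s2 : A -> bool) (f : form A) :
  {in atoms f, s1 =1 s2} -> eval_form s1 f = eval_form s2 f.
Proof.
elim: f => //= [a|g IHg|g IHg h IHh|g IHg h IHh|g IHg h IHh|g IHg h IHh] Es;
  rewrite ?Es ?mem_head ?IHg // ?IHh // => a ain; apply: Es;
  by rewrite mem_cat ain ?orbT.
Qed.

Lemma mem_range a b i : (i \in range a b) = (a <= i <= b).
Proof. by rewrite /range mem_iota; apply/idP/idP; lia. Qed.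

Lemma sum_range_le (F : nat -> nat) a b c : c <= b ->
  \sum_(i <- range a b | i <= c) F i = \sum_(a <= i < c.+1) F i.
Proof. by move=> cb; rewrite (big_nat_widen _ _ b.+1). Qed.

Lemma sum_nat_shift (F : nat -> nat) m n :
  \sum_(m <= i < n) F (i - m) = \sum_(k < n - m) F k.
Proof. by rewrite -{1}[m]add0n big_addn big_mkord; apply: eq_bigr => k _; rewrite addnK. Qed.

Lemma sum_expn2 n : \sum_(k < n) 2 ^ k = 2 ^ n - 1.
Proof. by rewrite subn1 predn_exp mul1n. Qed.

Lemma sum_succ n : \sum_(k < n) (k + 1) = (1 + n) * n %/ 2.
Proof.
rewrite divn2 add1n -bin2 -bin2_sum big_nat_recl // add0n big_mkord.
by apply: eq_bigr => k _; rewrite addn1.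
Qed.

Section CoveringArrayNumber.
Variables (P V : finType) (d : P -> {set V}) (phi : form (P * V)) (t : nat).

Lemma has_CA_CAN : has_CA d phi t (CAN d phi t).
Proof. by rewrite /CAN; case: ex_minnP. Qed.

Lemma CAN_min n : has_CA d phi t n -> CAN d phi t <= n.
Proof. by rewrite /CAN; case: ex_minnP => m _; apply. Qed.

End CoveringArrayNumber.

Section CCXEncoding.
Variables (P V : finType) (d : P -> {set V}) (phi : form (P * V)).
Variables (t N lb : nat) (w : nat -> nat).

Local Notation Ta := (allowed_tuples d phi t).
Local Notation CCX := (WPMSat_CCX d phi N t lb w).

Record ccx_model (s : mvar P V -> bool) : Prop := CCXModel {
  model_X : forall i p, 0 < i <= N ->
    exists2 v, v \in d p & {in d p, forall y, s (Xv i p y) = (y == v)};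
  model_SUTX : forall i, 0 < i <= N -> eval_form (fun a => s (Xv i a.1 a.2)) phi;
  model_CCXa : forall i tau x, 0 < i <= N -> tau \in Ta -> x \in tau ->
    s (Cv i tau) -> s (Cv i.-1 tau) || s (Xv i x.1 x.2);
  model_CCXb : forall tau, tau \in Ta -> s (Cv N tau);
  model_CCXc : forall tau, tau \in Ta -> s (Cv N tau) -> ~~ s (Cv 0 tau);
  model_BSU : forall i, lb + 2 <= i < N -> s (Uv P V i.+1) -> s (Uv P V i);
  model_CCU : forall i tau, lb + 2 <= i <= N -> tau \in Ta ->
    ~~ s (Cv i.-1 tau) -> s (Uv P V i)
}.

Lemma hard_sat_CCXP s : hard_sat CCX s <-> ccx_model s.
Proof.
have X_iff i p : eval_form s (exactly_one [seq fv (Xv i p v) | v <- enum (d p)]) <->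
    exists2 v, v \in d p & {in d p, forall y, s (Xv i p y) = (y == v)}.
  split=> [/exactly_one_mapP[|v]|[v vd sE]]; first exact: enum_uniq.
    by rewrite mem_enum => vd sE; exists v => // y; rewrite -mem_enum; apply: sE.
  apply/exactly_one_mapP; first exact: enum_uniq.
  by exists v => [|y]; rewrite mem_enum // => /sE.
rewrite /hard_sat /= !all_cat [all _ (flatten (flatten _))]all_flatten.
split=> [|[X SUTX CCXa CCXb CCXc BSU CCU]].
  move=> /and5P[/all_allpairsP X SUTX /all_allpairsP CCXa CCXb
                /and3P[CCXc BSU /all_allpairsP CCU]].
  move: SUTX CCXb CCXc BSU; rewrite !all_map => /allP SUTX /allP CCXb /allP CCXc /allP BSU.
  split=> [i p iN | i iN | i tau x iN tauT xtau | tau tauT | tau tauT | i iN | i tau iN tauT].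
  - by apply/X_iff/X; rewrite ?mem_range ?mem_enum.
  - by have := SUTX i; rewrite mem_range /= eval_subst_form; apply.
  - have := CCXa i tau; rewrite mem_range mem_enum all_map => /(_ iN tauT) /allP.
    by move=> /(_ x); rewrite mem_enum => /(_ xtau) /implyP.
  - by apply: CCXb; rewrite mem_enum.
  - by apply/implyP/CCXc; rewrite mem_enum.
  - by apply/implyP/BSU; rewrite mem_range; lia.
  - by apply/implyP/CCU; rewrite ?mem_range ?mem_enum.
apply/and5P; split; [| | | | apply/and3P; split]; rewrite ?all_map.
- by apply/all_allpairsP => i p; rewrite mem_range => iN _; apply/X_iff/X.
- by apply/allP => i; rewrite mem_range /= eval_subst_form; apply: SUTX.
- apply/all_allpairsP => i tau; rewrite mem_range mem_enum => iN tauT.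
  by rewrite all_map; apply/allP => x; rewrite mem_enum => xtau; apply/implyP/CCXa.
- by apply/allP => tau; rewrite mem_enum; apply: CCXb.
- by apply/allP => tau; rewrite mem_enum => tauT; apply/implyP/CCXc.
- by apply/allP => i; rewrite mem_range => iN; apply/implyP/BSU; lia.
- apply/all_allpairsP => i tau; rewrite mem_range mem_enum => iN tauT.
  exact/implyP/CCU.
Qed.

Lemma cost_CCX s : cost CCX s = \sum_(i <- range (lb + 2) N | s (Uv P V i)) w i.
Proof. by rewrite /cost big_map [RHS]big_mkcond; apply: eq_bigr => i _ /=; case: (s _). Qed.

Lemma allowed_tuple_dom tau x : tau \in Ta -> x \in tau -> x.2 \in d x.1.
Proof. by rewrite inE => /andP[/and3P[_ /forall_inP dom _] _]; apply: dom. Qed.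

Section Decoding.
Hypothesis Hphi : forall a, a \in atoms phi -> a.2 \in d a.1.
Variables (A0 : {ffun P -> V}) (s : mvar P V -> bool).
Hypothesis s_model : ccx_model s.

(* [A0] is only a default: for 0 < i <= N constraint (X) makes the pick succeed. *)
Definition decoded_row i : {ffun P -> V} :=
  [ffun p => odflt (A0 p) [pick v in d p | s (Xv i p v)]].

Lemma decoded_rowP i p : 0 < i <= N ->
  decoded_row i p \in d p /\ {in d p, forall v, s (Xv i p v) = (decoded_row i p == v)}.
Proof.
move=> iN; have [v vd sE] := model_X s_model p iN.
suff ->: decoded_row i p = v by split=> // y /sE; rewrite eq_sym.
rewrite ffunE; case: pickP => [v' /andP[v'd] | none] /=; first by rewrite sE => // /eqP.
by have := none v; rewrite vd sE ?eqxx.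
Qed.

Lemma decoded_row_test_case i : 0 < i <= N -> test_case d phi (decoded_row i).
Proof.
move=> iN; apply/andP; split; first by apply/forallP => p; case: (decoded_rowP p iN).
rewrite -(eq_in_eval_form (s1 := fun a => s (Xv i a.1 a.2))) ?(model_SUTX s_model) //.
by move=> a /Hphi ad; case: (decoded_rowP a.1 iN) => _ ->.
Qed.

Lemma model_Cv_covered tau k : tau \in Ta -> k <= N -> s (Cv k tau) ->
  exists2 i, 0 < i <= k & covers (decoded_row i) tau.
Proof.
move=> tauT; elim: k => [|k IH] kN sk.
  by move: (model_CCXc s_model tauT (model_CCXb s_model tauT)); rewrite sk.
case sk': (s (Cv k tau)).
  by have [i ik cov] := IH (ltnW kN) sk'; exists i => //; lia.
exists k.+1; first by rewrite /= leqnn.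
apply/forall_inP => x xtau.
have kN' : 0 < k.+1 <= N by lia.
have := model_CCXa s_model kN' tauT xtau sk; rewrite sk' /=.
by case: (decoded_rowP x.1 kN') => _ -> //; apply: allowed_tuple_dom xtau.
Qed.

Lemma has_CA_decoded k : k <= N -> {in Ta, forall tau, s (Cv k tau)} -> has_CA d phi t k.
Proof.
move=> kN sk; apply/existsP; exists [ffun j : 'I_k => decoded_row j.+1].
apply/andP; split.
  by apply/forallP => j; rewrite ffunE; apply: decoded_row_test_case; have := ltn_ord j; lia.
apply/forall_inP => tau tauT; apply/existsP.
have [i ik cov] := model_Cv_covered tauT kN (sk _ tauT).
have ik' : i.-1 < k by lia.
by exists (Ordinal ik'); rewrite ffunE /= prednK //; case/andP: ik.
Qed.

Lemma CAN_le_model : CAN d phi t <= N.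
Proof. by apply/CAN_min/has_CA_decoded => // tau; apply: model_CCXb. Qed.

Lemma model_Uv i : lb + 2 <= i <= N -> i <= CAN d phi t -> s (Uv P V i).
Proof.
move=> iN iCAN; apply/negPn/negP => nUi.
suff: CAN d phi t <= i.-1 by lia.
apply/CAN_min/has_CA_decoded; first by lia.
by move=> tau tauT; apply: contraR nUi; apply: model_CCU.
Qed.

End Decoding.

Section Construction.
Variables (A0 : {ffun P -> V}) (c : nat) (f : {ffun 'I_c -> {ffun P -> V}}).
Hypothesis A0_test_case : test_case d phi A0.
Hypothesis f_test_case : forall k, test_case d phi (f k).
Hypothesis f_covers : {in Ta, forall tau, [exists k, covers (f k) tau]}.

(* Row [i] is [f (i - 1)], padded with the test case [A0] outside 1..c. *)
Definition ca_row i : {ffun P -> V} := odflt A0 (omap f (insub i.-1)).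

Definition ca_assignment (x : mvar P V) : bool :=
  match x with
  | Xv i p v => ca_row i p == v
  | Cv i tau => [exists k : 'I_c, (k < i) && covers (f k) tau]
  | Uv i => i <= c
  end.

Lemma ca_row_test_case i : test_case d phi (ca_row i).
Proof. by rewrite /ca_row; case: insub. Qed.

Lemma ca_rowS (k : 'I_c) : ca_row k.+1 = f k.
Proof. by rewrite /ca_row /= valK. Qed.

Lemma ca_assignment_model : c <= N -> ccx_model ca_assignment.
Proof.
move=> cN; have covered tau i : tau \in Ta -> c <= i -> ca_assignment (Cv i tau).
  move=> tauT ci; have /existsP[k cov] := f_covers tauT.
  by apply/existsP; exists k; rewrite cov andbT; apply: leq_trans ci.
split=> /=.
- move=> i p _; exists (ca_row i p) => [|y _]; last by rewrite eq_sym.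
  by case/andP: (ca_row_test_case i) => /forallP.
- by move=> i _; case/andP: (ca_row_test_case i).
- move=> i tau x _ _ xtau /existsP[k /andP[ki cov]].
  have [lt_k_i1 | ge_k_i1] := ltnP k i.-1.
    by apply/orP; left; apply/existsP; exists k; rewrite lt_k_i1.
  have -> : i = k.+1 by lia.
  by rewrite ca_rowS (forall_inP cov) ?orbT.
- by move=> tau tauT; apply: covered.
- by move=> tau _ _; apply/negP => /existsP[].
- by move=> i _; apply: ltnW.
- move=> i tau _ tauT; apply: contraR; rewrite -ltnNge => lt_c_i.
  by apply: covered; lia.
Qed.

End Construction.

Lemma OptimalCost_CCX : (forall a, a \in atoms phi -> a.2 \in d a.1) ->
  (exists A, test_case d phi A) ->
  OptimalCost CCX (if CAN d phi t <= N
                   then Some (\sum_(lb + 2 <= i < (CAN d phi t).+1) w i) else None).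
Proof.
move=> Hphi [A0 A0_tc]; case: ifP => [CAN_N | /negP CAN_N]; last first.
  by case=> s /hard_sat_CCXP s_model; apply/CAN_N/(CAN_le_model Hphi A0 s_model).
rewrite -(sum_range_le _ _ CAN_N); split.
  have /existsP[f /andP[/forallP f_tc /forall_inP f_cov]] := has_CA_CAN d phi t.
  exists (ca_assignment A0 f); split; last exact: cost_CCX.
  exact/hard_sat_CCXP/(ca_assignment_model A0_tc f_tc f_cov CAN_N).
move=> s /hard_sat_CCXP s_model; rewrite cost_CCX big_mkcond [leqRHS]big_mkcond.
rewrite big_seq [leqRHS]big_seq; apply: leq_sum => i; rewrite mem_range => iN /=.
by case: ifP => // iCAN; rewrite (model_Uv Hphi A0 s_model iN iCAN).
Qed.

End CCXEncoding.

Theorem proposition5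
  (P V : finType) (d : P -> {set V}) (phi : form (P * V))
  (* each domain is nonempty *)
  (Hd : forall p, d p != set0)
  (* atoms (p = v) of phi satisfy v \in d p *)
  (Hphi : forall a, a \in atoms phi -> a.2 \in d a.1)
  (* at least one test case exists *)
  (Htc : exists A, test_case d phi A)
  (t N lb : nat)
  (Ht : 1 <= t <= #|P|) (HN : 1 <= N)
  (Hlb : lb < CAN d phi t) :
  OptimalCost (WPMSat_CCX d phi N t lb (fun i => 2 ^ (i - (lb + 2))))
    (if CAN d phi t <= N then Some (2 ^ (CAN d phi t - (lb + 1)) - 1) else None)
  /\
  OptimalCost (WPMSat_CCX d phi N t lb (fun i => i - (lb + 2) + 1))
    (if CAN d phi t <= N
     then Some ((1 + (CAN d phi t - (lb + 1))) * (CAN d phi t - (lb + 1)) %/ 2)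
     else None).
Proof.
have shift F : \sum_(lb + 2 <= i < (CAN d phi t).+1) F (i - (lb + 2)) =
               \sum_(k < CAN d phi t - (lb + 1)) F k.
  by rewrite sum_nat_shift; have -> : (CAN d phi t).+1 - (lb + 2) = CAN d phi t - (lb + 1) by lia.
split.
- have := OptimalCost_CCX t N lb (fun i => 2 ^ (i - (lb + 2))) Hphi Htc.
  by rewrite (shift (expn 2)) sum_expn2.
- have := OptimalCost_CCX t N lb (fun i => i - (lb + 2) + 1) Hphi Htc.
  by rewrite (shift (addn^~ 1)) sum_succ.
Qed.
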